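(* Let $p$ be an odd prime, $\xi=e^{2\pi i/p}$, $0\neq n\in\mathbb Z$. Let $Y,\widetilde Y\in\mathrm{Sp}(p-1,\mathbb Z[1/n])$ have order $p$, and let $\alpha,\beta\in\mathbb Z[1/n][\xi]^{p-1}$ with $Y\alpha=\xi\alpha$ and $\widetilde Y\beta=\xi\beta$ (nonzero). Let $\mathfrak a$, resp. $\mathfrak b$, be the ideal of $\mathbb Z[1/n][\xi]$ with $\mathbb Z[1/n]$-basis the entries of $\alpha$, resp. $\beta$, and put $a=D^{-1}\alpha^{\mathrm T}J\overline\alpha$, $b=D^{-1}\beta^{\mathrm T}J\overline\beta$. Then $Y$ and $\widetilde Y$ are conjugate in $\mathrm{Sp}(p-1,\mathbb Z[1/n])$ if and only if $[\mathfrak a,a]=[\mathfrak b,b]$.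
   Context: $\mathrm{Sp}(2m,R)=\{M\in\mathrm{GL}(2m,R): M^{\mathrm T}JM=J\}$ with $J=\begin{pmatrix}0&I_m\\-I_m&0\end{pmatrix}$. $D=p\,\xi^{(p+1)/2}/(\xi-1)$. Bar is complex conjugation. For pairs $(\mathfrak a,a)$ of an ideal $\mathfrak a\subseteq\mathbb Z[1/n][\xi]$ and $0\neq a$ with $\mathfrak a\overline{\mathfrak a}=(a)$, $[\mathfrak a,a]=[\mathfrak b,b]$ means there exist nonzero $\lambda,\mu\in\mathbb Z[1/n][\xi]$ with $\lambda\mathfrak a=\mu\mathfrak b$ and $\lambda\overline\lambda a=\mu\overline\mu b$. *)

(* everything lives inside the algebraic complex numbers algC,
   whose conjugation ^* is complex conjugation. *)
From HB Require Import structures.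
From mathcomp Require Import all_boot all_order all_algebra.
From mathcomp Require Import algC.
Set Implicit Arguments. Unset Strict Implicit. Unset Printing Implicit Defensive.
Import Order.TTheory GRing.Theory Num.Theory.
Local Open Scope ring_scope.

(* xi = e^{2 pi i / p}: p.-root (-1) is e^{i pi / p} (minimal argument root). *)
Definition xi (p : nat) : algC := (p.-root (-1 : algC)) ^+ 2.

Definition inZinv (n : int) (x : algC) : Prop :=
  exists (m : int) (k : nat), x = m%:~R / (n%:~R) ^+ k.

Definition inZinvxi (n : int) (p : nat) (x : algC) : Prop :=
  exists q : {poly algC}, (forall i, inZinv n q`_i) /\ x = q.[xi p].

Definition mxZinv (n : int) (N M : nat) (A : 'M[algC]_(N, M)) : Prop :=
  forall i j, inZinv n (A i j).

(* J = [[0, I_m], [-I_m, 0]] of size N = 2m. *)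
Definition Jmx (N : nat) : 'M[algC]_N :=
  \matrix_(i < N, j < N) (if (i < N./2)%N && (nat_of_ord j == nat_of_ord i + N./2)%N then 1
                  else if (N./2 <= i)%N && (nat_of_ord i == nat_of_ord j + N./2)%N then -1 else 0).

Definition inSp (n : int) (N : nat) (M : 'M[algC]_N) : Prop :=
  [/\ mxZinv n M, M \in unitmx, mxZinv n (invmx M) & M^T *m Jmx N *m M = Jmx N].

Definition Dconst (p : nat) : algC :=
  p%:R * xi p ^+ (p.+1./2) / (xi p - 1).

Definition spanZinv (n : int) (N : nat) (al : 'cV[algC]_N) (x : algC) : Prop :=
  exists c : 'I_N -> algC, (forall i, inZinv n (c i)) /\ x = \sum_i c i * al i 0.

Definition herm_const (p : nat) (al : 'cV[algC]_p.-1) : algC :=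
  (Dconst p)^-1 * (al^T *m Jmx p.-1 *m map_mx Num.conj al) 0 0.

(* [frak a, a] = [frak b, b]: nonzero lambda, mu in Z[1/n][xi] with
   lambda frak a = mu frak b (as sets) and lambda conj(lambda) a = mu conj(mu) b. *)
Definition pair_class_eq (n : int) (p : nat) (N : nat)
    (al : 'cV[algC]_N) (a : algC) (be : 'cV[algC]_N) (b : algC) : Prop :=
  exists la mu : algC,
    [/\ inZinvxi n p la /\ inZinvxi n p mu, la != 0, mu != 0,
        (forall z, (exists x, spanZinv n al x /\ z = la * x) <->
                   (exists y, spanZinv n be y /\ z = mu * y)) &
        la * Num.conj la * a = mu * Num.conj mu * b].
Arguments herm_const p al : clear implicits.

From HB Require Import structures.
From mathcomp Require Import all_boot all_order all_algebra.
From mathcomp Require Import algC.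
Import Order.TTheory GRing.Theory Num.Theory.
Local Open Scope ring_scope.
From mathcomp Require Import algnum ring zify.
Set Implicit Arguments. Unset Strict Implicit. Unset Printing Implicit Defensive.

(* The Galois conjugates sigma_k(alpha), k = 1 .. p-1, of an xi-eigenvector
   alpha of a rational matrix Y are eigenvectors of Y for the p-1 distinct
   eigenvalues xi^k, hence a basis.  So a rational matrix is determined by its
   value at alpha, a Y-invariant rational form M by alpha^T M conj(alpha), and
   the xi-eigenspace of Y is the line through alpha.  A symplectic conjugator P
   maps alpha to a multiple of beta, which yields the equivalence of pairs.
   Conversely lambda, mu give Z[1/n]-matrices Q, Q' with
   Q beta = (lambda/mu) alpha and Q' alpha = (mu/lambda) beta, and the three
   uniqueness statements force Q' Q = 1, Q Yt = Y Q and Q^T J Q = J. *)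

Lemma prime_prim_root (R : idomainType) p (z : R) :
  prime p -> z ^+ p = 1 -> z != 1 -> p.-primitive_root z.
Proof.
move=> p_pr zp z_neq1; have [m prim_m m_dvd] := prim_order_exists (prime_gt0 p_pr) zp.
have /primeP[_ /(_ m m_dvd)/orP[/eqP m1 | /eqP mp]] := p_pr; last by rewrite -mp.
by move: z_neq1; rewrite -(prim_expr_order prim_m) m1 expr1 eqxx.
Qed.

Lemma xi_prim p : prime p -> p.-primitive_root (xi p).
Proof.
move=> p_pr; have p_gt1 := prime_gt1 p_pr; have p_gt0 := ltnW p_gt1.
have rootp : p.-root (-1 : algC) ^+ p = -1 by rewrite rootCK.
apply: prime_prim_root => //; first by rewrite /xi -exprM mulnC exprM rootp sqrrN expr1n.
rewrite /xi sqrf_eq1; apply/norP; split; apply/eqP => r_eq.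
  by move: rootp; rewrite r_eq expr1n => /eqP; rewrite -subr_eq0 opprK -(natrD _ 1 1) pnatr_eq0.
by move: (rootC_lt0 (-1 : algC) p_gt1); rewrite r_eq ltrN10.
Qed.

Lemma conj_unity_root (z : algC) N : (0 < N)%N -> z ^+ N = 1 -> z^* = z^-1.
Proof.
move=> N_gt0 zN; have norm_z : `|z| = 1.
  by apply/eqP; rewrite -(pexpr_eq1 N_gt0) // -normrX zN normr1.
by rewrite invC_norm norm_z expr1n invr1 mul1r.
Qed.

Lemma Dconst_neq0 p : prime p -> Dconst p != 0.
Proof.
move=> p_pr; have xi_pr := xi_prim p_pr; have p_gt0 := prime_gt0 p_pr.
have xi_neq0 : xi p != 0 by rewrite (prim_root_eq0 xi_pr) -lt0n.
rewrite /Dconst !mulf_neq0 ?invr_eq0 ?pnatr_eq0 -?lt0n ?(expf_neq0 _ xi_neq0) //.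
by rewrite subr_eq0 -[xi p]expr1 -(prim_order_dvd xi_pr) dvdn1 (gtn_eqF (prime_gt1 p_pr)).
Qed.

Section DistinctEigenvalues.
Variables (F : fieldType) (N : nat) (g : 'M[F]_N).
Variables (a : 'I_N -> F) (r : 'I_N -> 'rV[F]_N).
Hypotheses (a_inj : injective a) (r_eigen : forall i, r i *m g = a i *: r i).
Hypothesis r_neq0 : forall i, r i != 0.

Lemma eigenvector_sub_eigenspace i : (r i <= eigenspace g (a i))%MS.
Proof. exact/eigenspaceP. Qed.

Lemma rank_sum_eigenspace :
  \rank (\sum_i eigenspace g (a i)) = (\sum_i \rank (eigenspace g (a i)))%N.
Proof. exact/mxdirectP/(mxdirect_sum_eigenspace g (in2W a_inj)). Qed.

Lemma rank_eigenspace i : \rank (eigenspace g (a i)) = 1%N.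
Proof.
have rank_ge1 j : (1 <= \rank (eigenspace g (a j)))%N.
  by rewrite (leq_trans _ (mxrankS (eigenvector_sub_eigenspace j))) // rank_rV r_neq0.
have : (\sum_j (\rank (eigenspace g (a j)) - 1) == 0)%N.
  rewrite sumnB // sum1_card card_ord subn_eq0 -rank_sum_eigenspace.
  exact: rank_leq_col.
rewrite sum_nat_eq0 => /forallP/(_ i); rewrite subn_eq0 => /implyP/(_ isT) rank_le1.
by apply/eqP; rewrite eqn_leq rank_le1 rank_ge1.
Qed.

Lemma eigenspace_sub_eigenvector i : (eigenspace g (a i) <= r i)%MS.
Proof.
have [_] := mxrank_leqif_sup (eigenvector_sub_eigenspace i).
by rewrite rank_rV r_neq0 rank_eigenspace eqxx => <-.
Qed.

Lemma eigenvectors_mul_eq0 m (B : 'M_(N, m)) : (forall i, r i *m B = 0) -> B = 0.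
Proof.
move=> rB0; rewrite -[B]mul1mx; apply/sub_kermxP.
have full : (1%:M <= \sum_i eigenspace g (a i))%MS.
  rewrite sub1mx /row_full rank_sum_eigenspace.
  by rewrite (eq_bigr _ (fun i _ => rank_eigenspace i)) sum1_card card_ord.
apply: submx_trans (full) _; apply/sumsmx_subP => i _.
exact/(submx_trans (eigenspace_sub_eigenvector i))/sub_kermxP/rB0.
Qed.

End DistinctEigenvalues.

Definition inQxi p (x : algC) :=
  exists2 q : {poly algC}, q \is a polyOver Crat & x = q.[xi p].

Lemma rmorph_horner_rat (f : {rmorphism algC -> algC}) (q : {poly algC}) y :
  q \is a polyOver Crat -> f q.[y] = q.[f y].
Proof.
move=> q_rat; rewrite -horner_map map_poly_id // => c /(nthP 0)[i _ <-].
exact/aut_Crat/(polyOverP q_rat).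
Qed.

Lemma inQxi_aut_eq p (f g : {rmorphism algC -> algC}) x :
  inQxi p x -> f (xi p) = g (xi p) -> f x = g x.
Proof. by move=> [q q_rat ->] fg; rewrite !rmorph_horner_rat // fg. Qed.

Lemma map_mx_rat (f : {rmorphism algC -> algC}) m n (A : 'M[algC]_(m, n)) :
  A \is a mxOver Crat -> map_mx f A = A.
Proof. by move=> /mxOverP A_rat; apply: map_mx_id_in => i j; apply: aut_Crat. Qed.

Lemma xi_aut_exists p (i : 'I_p.-1) :
  prime p -> {u : {rmorphism algC -> algC} | u (xi p) = xi p ^+ i.+1}.
Proof.
move=> p_pr; have i_lt : (i.+1 < p)%N by have := ltn_ord i; have := prime_gt1 p_pr; lia.
have [|u uE] := @Qn_aut_exists i.+1 p.
  by rewrite coprime_sym prime_coprime // gtnNdvd.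
by exists u; rewrite uE // prim_expr_order // xi_prim.
Qed.

Definition hform N (M : 'M[algC]_N) (v : 'cV[algC]_N) : algC :=
  (v^T *m M *m map_mx Num.conj v) 0 0.

Lemma hformZ N (M : 'M_N) c v : hform M (c *: v) = c * c^* * hform M v.
Proof. by rewrite /hform linearZ /= map_mxZ -!scalemxAl -scalemxAr scalerA mxE. Qed.

Lemma hform_mulmx N (M P : 'M_N) v :
  P \is a mxOver Crat -> hform M (P *m v) = hform (P^T *m M *m P) v.
Proof. by move=> P_rat; rewrite /hform map_mxM map_mx_rat // trmx_mul !mulmxA. Qed.

Lemma hformB N (M1 M2 : 'M_N) v : hform (M1 - M2) v = hform M1 v - hform M2 v.
Proof. by rewrite /hform mulmxBr mulmxBl mxE [in X in _ + X]mxE. Qed.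

Section GaloisConjugates.
Variables (p : nat) (Z : 'M[algC]_p.-1) (v : 'cV[algC]_p.-1).
Hypotheses (p_pr : prime p) (Z_rat : Z \is a mxOver Crat).
Hypotheses (v_Qxi : forall i, inQxi p (v i 0)) (v_neq0 : v != 0).
Hypothesis Zv : Z *m v = xi p *: v.

Let xi_pr := xi_prim p_pr.
Let sigma i := sval (xi_aut_exists i p_pr).
Let sigma_xi i : sigma i (xi p) = xi p ^+ i.+1.
Proof. by rewrite /sigma; case: xi_aut_exists. Qed.
Let conj_row i := (map_mx (sigma i) v)^T.

Lemma conj_row_eigen i : conj_row i *m Z^T = xi p ^+ i.+1 *: conj_row i.
Proof.
by rewrite -trmx_mul -[Z](map_mx_rat (sigma i)) // -map_mxM Zv map_mxZ sigma_xi linearZ.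
Qed.

Lemma conj_row_neq0 i : conj_row i != 0.
Proof. by rewrite trmx_eq0 map_mx_eq0. Qed.

Lemma xi_expS_inj : injective (fun i : 'I_p.-1 => xi p ^+ i.+1).
Proof.
move=> i j /eqP; rewrite (eq_prim_root_expr xi_pr) !modn_small => [/eqP[]/val_inj //||];
  by have := ltn_ord i; have := ltn_ord j; have := prime_gt1 p_pr; lia.
Qed.

Let conj_rows_mul_eq0 := eigenvectors_mul_eq0 xi_expS_inj conj_row_eigen conj_row_neq0.

Lemma rat_mx_eq_on_eigenvector m (A B : 'M_(m, p.-1)) :
  A \is a mxOver Crat -> B \is a mxOver Crat -> A *m v = B *m v -> A = B.
Proof.
move=> A_rat B_rat ABv; apply/eqP; rewrite -subr_eq0; apply/eqP/trmx_inj.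
rewrite trmx0; apply: conj_rows_mul_eq0 => i.
rewrite -trmx_mul -[A - B](map_mx_rat (sigma i)) ?rpredB //.
by rewrite -map_mxM mulmxBl ABv subrr map_mx0 trmx0.
Qed.

Lemma eigenvector_xi_line w : Z *m w = xi p *: w -> exists c, w = c *: v.
Proof.
move=> Zw; have p1_gt0 : (0 < p.-1)%N by have := prime_gt1 p_pr; lia.
pose i0 : 'I_p.-1 := Ordinal p1_gt0.
have : (w^T <= eigenspace Z^T (xi p ^+ i0.+1))%MS.
  by apply/eigenspaceP; rewrite -trmx_mul Zw linearZ expr1.
have sigma0_v : map_mx (sigma i0) v = v.
  apply/matrixP => i j; rewrite mxE (ord1 j).
  by apply: (inQxi_aut_eq (g := idfun)); rewrite // sigma_xi expr1.
move/submx_trans/(_ (eigenspace_sub_eigenvector xi_expS_inj conj_row_eigen conj_row_neq0 i0)).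
rewrite /conj_row sigma0_v.
by case/sub_rVP => c wc; exists c; apply: trmx_inj; rewrite linearZ.
Qed.

Lemma xi_expS_mul_eq1 (i j : 'I_p.-1) : xi p ^+ i.+1 * xi p ^+ j.+1 = 1 -> (i.+1 + j.+1 = p)%N.
Proof.
move/eqP; rewrite -exprD -(prim_order_dvd xi_pr) => /dvdnP[k sum_eq].
have := ltn_ord i; have := ltn_ord j; have := prime_gt1 p_pr => p_gt1 j_lt i_lt.
have k_lt2 : (k < 2)%N by rewrite -(ltn_pmul2r (ltnW p_gt1)) -sum_eq; lia.
by case: k sum_eq k_lt2 => [|[|]] //; lia.
Qed.

Lemma conj_row_opposite (i j : 'I_p.-1) :
  (i.+1 + j.+1 = p)%N -> (conj_row j)^T = map_mx (sigma i) (map_mx Num.conj v).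
Proof.
move=> ij; rewrite trmxK; apply/matrixP => a b; rewrite !mxE (ord1 b).
apply: (inQxi_aut_eq (p := p) (g := sigma i \o Num.conj)) => //=.
have xi_neq0 : xi p != 0 by rewrite (prim_root_eq0 xi_pr) -lt0n prime_gt0.
rewrite (conj_unity_root (prime_gt0 p_pr) (prim_expr_order xi_pr)) fmorphV sigma_xi sigma_xi.
have xiS_neq0 := expf_neq0 i.+1 xi_neq0.
by apply: (mulfI xiS_neq0); rewrite divff // -exprD ij prim_expr_order.
Qed.

Lemma rat_invariant_form_eq (M1 M2 : 'M_p.-1) :
  M1 \is a mxOver Crat -> M2 \is a mxOver Crat ->
  Z^T *m M1 *m Z = M1 -> Z^T *m M2 *m Z = M2 ->
  hform M1 v = hform M2 v -> M1 = M2.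
Proof.
move=> M1_rat M2_rat ZM1 ZM2 vM; apply/eqP; rewrite -subr_eq0; apply/eqP.
set M := M1 - M2.
have M_rat : M \is a mxOver Crat by rewrite rpredB.
have ZM : Z^T *m M *m Z = M by rewrite mulmxBr mulmxBl ZM1 ZM2.
have vM0 : v^T *m M *m map_mx Num.conj v = 0.
  have : hform M v = 0 by rewrite hformB vM subrr.
  by rewrite /hform => vM0; apply/matrixP => a b; rewrite !ord1 vM0 mxE.
(* Invariance multiplies conj_row i *m M *m (conj_row j)^T by xi^(i+j+2), so
   it vanishes unless (i+1) + (j+1) = p, where it is sigma_i of v^T M conj(v). *)
have pair0 i j : conj_row i *m M *m (conj_row j)^T = 0.
  have [/xi_expS_mul_eq1 ij | xi_ij_neq1] := eqVneq (xi p ^+ i.+1 * xi p ^+ j.+1) 1.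
    rewrite (conj_row_opposite ij) /conj_row map_trmx -[M](map_mx_rat (sigma i)) //.
    by rewrite -!map_mxM vM0 map_mx0.
  set s := _ *m _ *m _.
  have Zrow : Z *m (conj_row j)^T = xi p ^+ j.+1 *: (conj_row j)^T.
    by rewrite -[Z]trmxK -trmx_mul conj_row_eigen linearZ.
  have : s = (xi p ^+ i.+1 * xi p ^+ j.+1) *: s.
    rewrite {1}/s -ZM !mulmxA conj_row_eigen -mulmxA Zrow -scalemxAl.
    by rewrite -!scalemxAr !scalemxAl !scalerA mulrC.
  move/eqP; rewrite -subr_eq0 -{1}[s]scale1r -scalerBl scalemx_eq0 subr_eq0.
  by rewrite eq_sym (negbTE xi_ij_neq1) => /eqP.
apply/trmx_inj; rewrite trmx0; apply: conj_rows_mul_eq0 => j.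
apply/trmx_inj; rewrite trmx0 trmx_mul trmxK; apply: conj_rows_mul_eq0 => i.
by rewrite mulmxA pair0.
Qed.

End GaloisConjugates.

Lemma inZinv_rat n x : inZinv n x -> x \in Crat.
Proof. by move=> [m [k ->]]; rewrite rpredM ?rpredV ?rpredX ?rpred_int. Qed.

Lemma mxZinv_rat n N M (A : 'M_(N, M)) : mxZinv n A -> A \is a mxOver Crat.
Proof. by move=> A_Z; apply/mxOverP => i j; apply: inZinv_rat (A_Z i j). Qed.

Lemma inZinvxi_inQxi n p x : inZinvxi n p x -> inQxi p x.
Proof. by move=> [q [q_Z ->]]; exists q => //; apply/polyOverP => i; apply: inZinv_rat. Qed.

Section ZinvRing.
Variable n : int.
Hypothesis n_neq0 : n != 0.

Lemma inZinv0 : inZinv n 0.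
Proof. by exists 0, 0%N; rewrite mul0r. Qed.

Lemma inZinv1 : inZinv n 1.
Proof. by exists 1, 0%N; rewrite expr0 divr1. Qed.

Lemma inZinvD x y : inZinv n x -> inZinv n y -> inZinv n (x + y).
Proof.
move=> [a [k ->]] [b [l ->]]; have n_neq0' : (n%:~R : algC) != 0 by rewrite intr_eq0.
exists (a * n ^+ l + b * n ^+ k), (k + l)%N.
by rewrite rmorphD !rmorphM /= !rmorphXn exprD; field; rewrite !expf_neq0.
Qed.

Lemma inZinvM x y : inZinv n x -> inZinv n y -> inZinv n (x * y).
Proof.
move=> [a [k ->]] [b [l ->]]; exists (a * b), (k + l)%N.
by rewrite rmorphM exprD invfM /=; ring.
Qed.

Lemma inZinv_sum (I : finType) (F : I -> algC) :
  (forall i, inZinv n (F i)) -> inZinv n (\sum_i F i).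
Proof. by move=> F_Z; apply: (big_ind (inZinv n)); [exact: inZinv0 | exact: inZinvD |]. Qed.

Lemma inZinvxi_sum p (I : finType) (c x : I -> algC) :
  (forall i, inZinv n (c i)) -> (forall i, inZinvxi n p (x i)) ->
  inZinvxi n p (\sum_i c i * x i).
Proof.
move=> c_Z x_Zxi; apply: (big_ind (inZinvxi n p)).
- by exists 0; split=> [i|]; rewrite ?coef0 ?horner0 //; exact: inZinv0.
- move=> _ _ [q1 [q1_Z ->]] [q2 [q2_Z ->]]; exists (q1 + q2).
  by split=> [i|]; rewrite ?coefD ?hornerD //; apply: inZinvD.
- move=> i _; have [q [q_Z ->]] := x_Zxi i; exists (c i *: q).
  by split=> [k|]; rewrite ?coefZ ?hornerZ //; apply: inZinvM.
Qed.

Lemma spanZinv_mulmx N (A : 'M_N) (v : 'cV_N) x :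
  mxZinv n A -> spanZinv n (A *m v) x -> spanZinv n v x.
Proof.
move=> A_Z [c [c_Z ->]]; exists (fun j => \sum_i c i * A i j); split.
  by move=> j; apply: inZinv_sum => i; apply: inZinvM.
under eq_bigr do rewrite mxE mulr_sumr.
rewrite exchange_big /=; apply: eq_bigr => j _.
by rewrite mulr_suml; apply: eq_bigr => i _; rewrite mulrA.
Qed.

Lemma spanZinv_unitmx N (P : 'M_N) (v : 'cV_N) x :
  P \in unitmx -> mxZinv n P -> mxZinv n (invmx P) ->
  spanZinv n (P *m v) x <-> spanZinv n v x.
Proof.
move=> P_unit P_Z Pinv_Z; split; first exact: spanZinv_mulmx.
by move=> v_span; apply: (spanZinv_mulmx Pinv_Z); rewrite mulKmx.
Qed.

Lemma spanZinvZ N c (v : 'cV_N) z :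
  spanZinv n (c *: v) z <-> exists y, spanZinv n v y /\ z = c * y.
Proof.
have scale_sum d : \sum_i d i * (c *: v) i 0 = c * \sum_i d i * v i 0.
  by rewrite mulr_sumr; apply: eq_bigr => i _; rewrite mxE mulrCA.
split=> [[d [d_Z ->]] | [_ [[d [d_Z ->]] ->]]]; last by exists d; rewrite scale_sum.
by exists (\sum_i d i * v i 0); split; [exists d | rewrite scale_sum].
Qed.

Lemma spanZinv_entry N (v : 'cV_N) i : spanZinv n v (v i 0).
Proof.
exists (fun j => (j == i)%:R); split=> [j|].
  by case: (j == i); [exact: inZinv1 | exact: inZinv0].
by rewrite (bigD1 i) //= eqxx mul1r big1 ?addr0 // => j /negbTE ->; rewrite mul0r.
Qed.

Lemma mxZinv_of_spanZinv N (v w : 'cV_N) :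
  (forall i, spanZinv n w (v i 0)) -> exists2 Q, mxZinv n Q & Q *m w = v.
Proof.
move=> /fin_all_exists[C C_span]; exists (\matrix_(i, j) C i j) => [i j|].
  by rewrite mxE; case: (C_span i) => C_Z _; apply: C_Z.
apply/matrixP => i k; rewrite (ord1 k) mxE; case: (C_span i) => _ ->.
by apply: eq_bigr => j _; rewrite mxE.
Qed.

End ZinvRing.

Lemma Jmx_rat N : Jmx N \is a mxOver Crat.
Proof.
apply/mxOverP => i j; rewrite mxE.
by case: ifP => _; [|case: ifP => _]; rewrite ?rpredN ?rpred1 ?rpred0.
Qed.

Section Conjugacy.
Variables (p : nat) (n : int) (Y Yt : 'M[algC]_p.-1) (al be : 'cV[algC]_p.-1).
Hypotheses (p_pr : prime p) (n_neq0 : n != 0) (Y_Sp : inSp n Y) (Yt_Sp : inSp n Yt).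
Hypotheses (al_Zxi : forall i, inZinvxi n p (al i 0)) (be_Zxi : forall i, inZinvxi n p (be i 0)).
Hypotheses (al_neq0 : al != 0) (be_neq0 : be != 0).
Hypotheses (Y_al : Y *m al = xi p *: al) (Yt_be : Yt *m be = xi p *: be).

Let J := Jmx p.-1.
Let Y_rat : Y \is a mxOver Crat. Proof. by case: Y_Sp => /mxZinv_rat. Qed.
Let Yt_rat : Yt \is a mxOver Crat. Proof. by case: Yt_Sp => /mxZinv_rat. Qed.
Let herm_constE v : herm_const p v = (Dconst p)^-1 * hform J v. Proof. by []. Qed.

Lemma Sp_conj_pair_class_eq :
  (exists P, inSp n P /\ P *m Y *m invmx P = Yt) ->
  pair_class_eq n p al (herm_const p al) be (herm_const p be).
Proof.
move=> [P [[P_Z P_unit Pinv_Z PJ] PY]]; set w := P *m al.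
have Yt_w : Yt *m w = xi p *: w by rewrite /w -PY -!mulmxA mulKmx // Y_al -scalemxAr.
have be_Qxi i := inZinvxi_inQxi (be_Zxi i).
have [c w_eq] := eigenvector_xi_line p_pr Yt_rat be_Qxi be_neq0 Yt_be Yt_w.
have /cV0Pn[i be_i_neq0] := be_neq0.
have c_neq0 : c != 0.
  apply: contraNneq al_neq0 => c0; rewrite -(mulKmx P_unit al) -/w w_eq c0.
  by rewrite scale0r mulmx0.
have w_i : w i 0 = c * be i 0 by rewrite w_eq mxE.
have be_w : be i 0 *: w = w i 0 *: be by rewrite w_i w_eq scalerA mulrC.
exists (be i 0), (w i 0); split.
- split; first exact: be_Zxi.
  by rewrite mxE; apply: inZinvxi_sum => // j; apply: P_Z.
- exact: be_i_neq0.
- by rewrite w_i mulf_neq0.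
- move=> z; rewrite -!spanZinvZ -be_w /w scalemxAr.
  by rewrite (spanZinv_unitmx n_neq0 _ _ P_unit P_Z Pinv_Z).
- have hform_w : hform J w = hform J al by rewrite hform_mulmx ?PJ ?(mxZinv_rat P_Z).
  by rewrite !herm_constE -hform_w mulrCA -hformZ be_w hformZ mulrCA.
Qed.

Lemma pair_class_eq_Sp_conj :
  pair_class_eq n p al (herm_const p al) be (herm_const p be) ->
  exists P, inSp n P /\ P *m Y *m invmx P = Yt.
Proof.
move=> [la [mu [[_ _] la_neq0 mu_neq0 ideal_eq form_eq]]].
have scaled_span (u v : 'cV_p.-1) c d : c != 0 ->
    (forall i, exists y, spanZinv n v y /\ d * u i 0 = c * y) ->
    exists2 Q, mxZinv n Q & Q *m v = (d / c) *: u.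
  move=> c_neq0 u_span; apply: mxZinv_of_spanZinv => // i.
  have [y [y_span du]] := u_span i.
  by rewrite mxE mulrAC du mulrAC divff ?mul1r.
have [Q Q_Z Q_be] : exists2 Q, mxZinv n Q & Q *m be = (la / mu) *: al.
  apply: scaled_span => // i; apply/ideal_eq.
  by exists (al i 0); split; first exact: spanZinv_entry.
have [Q' Q'_Z Q'_al] : exists2 Q', mxZinv n Q' & Q' *m al = (mu / la) *: be.
  apply: scaled_span => // i; apply/ideal_eq.
  by exists (be i 0); split; first exact: spanZinv_entry.
have [Q_rat Q'_rat] := (mxZinv_rat Q_Z, mxZinv_rat Q'_Z).
have be_Qxi i := inZinvxi_inQxi (be_Zxi i).
have eq_on_be := rat_mx_eq_on_eigenvector p_pr Yt_rat be_neq0 Yt_be.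
have Q'Q : Q' *m Q = 1%:M.
  apply: eq_on_be; rewrite ?mxOverM ?mxOver_scalar ?rpred0 ?rpred1 //.
  rewrite -mulmxA Q_be -scalemxAr Q'_al scalerA mul1mx.
  by rewrite mulrC mulrA divfK // divff ?scale1r.
have [Q'_unit Q_unit] := mulmx1_unit Q'Q.
have Q'_inv : invmx Q' = Q by rewrite -[LHS]mulmx1 -Q'Q mulmxA mulVmx ?mul1mx.
have QYt : Q *m Yt = Y *m Q.
  apply: eq_on_be; rewrite ?mxOverM //.
  by rewrite -!mulmxA Yt_be Q_be -!scalemxAr Q_be Y_al !scalerA mulrC.
have QJ : Q^T *m J *m Q = J.
  have QT_rat : Q^T \is a mxOver Crat by apply/mxOverP => i j; rewrite mxE (mxOverP Q_rat).
  apply: (rat_invariant_form_eq p_pr Yt_rat be_Qxi be_neq0 Yt_be);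
    rewrite ?mxOverM ?Jmx_rat //; try by case: Yt_Sp.
    have -> : Yt^T *m (Q^T *m J *m Q) *m Yt = (Q *m Yt)^T *m J *m (Q *m Yt).
      by rewrite trmx_mul !mulmxA.
    have YJ : Y^T *m J *m Y = J by case: Y_Sp.
    by rewrite QYt trmx_mul !mulmxA -(mulmxA Q^T Y^T) -(mulmxA Q^T (Y^T *m J)) YJ.
  rewrite -hform_mulmx // Q_be hformZ rmorphM fmorphV /=.
  move: form_eq; rewrite !herm_constE => form_eq.
  have Dconst_neq0' := Dconst_neq0 p_pr; have mu'_neq0 : mu^* != 0 by rewrite conjC_eq0.
  apply: (mulfI (mulf_neq0 (mulf_neq0 mu_neq0 mu'_neq0) (invr_neq0 Dconst_neq0'))).
  by rewrite -[RHS]mulrA -form_eq; field; apply/and3P.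
exists Q'; split; last by rewrite Q'_inv -mulmxA -QYt mulmxA Q'Q mul1mx.
split; rewrite ?Q'_inv //.
have : (Q *m Q')^T *m J *m (Q *m Q') = Q'^T *m (Q^T *m J *m Q) *m Q'.
  by rewrite trmx_mul !mulmxA.
by rewrite QJ (mulmx1C Q'Q) trmx1 mul1mx mulmx1.
Qed.

End Conjugacy.

Theorem lemma3p6 (p : nat) (n : int) (Y Yt : 'M[algC]_p.-1)
    (al be : 'cV[algC]_p.-1) :
  prime p -> odd p -> n != 0 ->
  inSp n Y -> inSp n Yt ->
  Y ^+ p = 1%:M -> Y != 1%:M ->
  Yt ^+ p = 1%:M -> Yt != 1%:M ->
  (forall i, inZinvxi n p (al i 0)) -> (forall i, inZinvxi n p (be i 0)) ->
  al != 0 -> be != 0 ->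
  Y *m al = xi p *: al -> Yt *m be = xi p *: be ->
  ((exists P : 'M[algC]_p.-1, inSp n P /\ P *m Y *m invmx P = Yt) <->
   pair_class_eq n p al (herm_const p al) be (herm_const p be)).
Proof.
move=> p_pr _ n_neq0 Y_Sp Yt_Sp _ _ _ _ al_Zxi be_Zxi al_neq0 be_neq0 Y_al Yt_be.
split; [exact: Sp_conj_pair_class_eq | exact: pair_class_eq_Sp_conj].
Qed.
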